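(* Let $D$ denote the set of variable network games $(v,\rho)\in\mathbb V^N\times\mathbb P^N$ such that $v$ is component additive. Then: (i) the Expected Myerson Value $\Psi^m$ is an allocation rule on the class of variable network games which, on $D$, satisfies component balance and the balanced contributions property; and (ii) if $\Psi\colon\mathbb V^N\times\mathbb P^N\to\mathbb R^N$ is any allocation rule on the class of variable network games satisfying component balance and the balanced contributions property for all $(v,\rho)\in D$, then $\Psi(v,\rho)=\Psi^m(v,\rho)$ for all $(v,\rho)\in D$. That is, $\Psi^m$ is the unique allocation rule on the class of component additive variable network games that satisfies component balance and the balanced contributions property.
   Context: $N=\{1,\dots,n\}$ is a finite player set. A link is an unordered pair $ij=\{i,j\}$ of distinct players; $g_N$ is the set of all links; a network is any $g\subseteq g_N$; $\mathbb G^N$ is the set of all networks. For $g\in\mathbb G^N$: $N_i(g)=\{j\ne i: ij\in g\}$, $L_i(g)=\{ij\in g\}$, $N(g)=\bigcup_i N_i(g)$, and $N_0(g)=N\setminus N(g)$ (isolated players). For $S\subseteq N$, $g|S=\{ij\in g: i,j\in S\}$. A component of $g$ is a nonempty subnetwork $h\subseteq g$ that is connected (any two players of $N(h)$ are joined by a path in $h$) and maximal (if $i\in N(h)$ and $ij\in g$ then $ij\in h$); $C(g)$ is the set of components of $g$. A network formation probability distribution is a map $\rho\colon\mathbb G^N\to[0,1]$ with $\sum_g\rho(g)=1$; $\mathbb P^N$ is the set of these. $\mathbb G(\rho)=\{g:\rho(g)>0\}$, and the extent is $g(\rho)=\bigcup_{g\in\mathbb G(\rho)}g$. For a network $g$,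 the restriction $\rho_g\in\mathbb P^N$ is $\rho_g(h)=\sum_{h'\subseteq g_N\setminus g}\rho(h\cup h')$ if $h\subseteq g$ and $\rho_g(h)=0$ otherwise. For a player $i$, $\rho^{-i}=\rho_{g_N\setminus L_i(g_N)}$. A network game is $v\colon\mathbb G^N\to\mathbb R$ with $v(\varnothing)=0$; $\mathbb V^N$ is the set of these. $v$ is component additive if $v(g)=\sum_{h\in C(g)}v(h)$ for all $g$. A variable network game is a pair $(v,\rho)\in\mathbb V^N\times\mathbb P^N$. An allocation rule on the class of variable network games is a map $\Psi\colon\mathbb V^N\times\mathbb P^N\to\mathbb R^N$ with $\Psi_i(v,\rho)=0$ for every $i\in N_0(g(\rho))$. It is component balanced (on $(v,\rho)$ with $v$ component additive) if for every $h\in C(g(\rho))$: $\sum_{i\in N(h)}\Psi_i(v,\rho)=\sum_{g\in\mathbb G(\rho)}\rho(g)\,v(g\cap h)$. It satisfies the balanced contributions property if for all players $i\ne j$: $\Psi_i(v,\rho)-\Psi_i(v,\rho^{-j})=\Psi_j(v,\rho)-\Psi_j(v,\rho^{-i})$. The Myerson Value for network games is $Y^m_i(v,g)=\sum_{S\subseteq N\setminus\{i\}}\frac{\#S!\,(n-\#S-1)!}{n!}\,[v(g|(S\cup\{i\}))-v(g|S)]$. The Expected Myerson Value is $\Psi^m(v,\rho)=\sum_{g\in\mathbb G^N}\rho(g)\,Y^m(v,g)$. *)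

From HB Require Import structures.
From mathcomp Require Import all_boot all_order all_algebra.
From mathcomp Require Import reals.
Set Implicit Arguments. Unset Strict Implicit. Unset Printing Implicit Defensive.
Import Order.TTheory GRing.Theory Num.Theory.
Local Open Scope ring_scope.

Section Networks.
Variable n : nat.

Definition link := {e : {set 'I_n} | #|e| == 2%N}.
(* a network is any set of links; g_N = [set: link] *)
Definition network := {set link}.

Definition Lset (i : 'I_n) (g : network) : network := [set e in g | i \in val e].
Definition Nbr (i : 'I_n) (g : network) : {set 'I_n} :=
  [set j | (j != i) && [exists e in g, val e == [set i; j]]].
Definition Nset (g : network) : {set 'I_n} := \bigcup_i Nbr i g.
Definition N0 (g : network) : {set 'I_n} := ~: Nset g.
Definition restrN (g : network) (S : {set 'I_n}) : network :=
  [set e in g | val e \subset S].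

Definition adj (h : network) : rel 'I_n :=
  fun i j => [exists e in h, val e == [set i; j]] && (i != j).
Definition connectedN (h : network) : bool :=
  [forall i in Nset h, forall j in Nset h, connect (adj h) i j].
Definition maximalIn (g h : network) : bool :=
  [forall i in Nset h, forall e in g, (i \in val e) ==> (e \in h)].
Definition is_component (g h : network) : bool :=
  [&& h \subset g, h != set0, connectedN h & maximalIn g h].

Variable R : realType.

Definition ngame := {ffun network -> R}.
Definition pdist := {ffun network -> R}.

Definition is_network_game (v : ngame) : Prop := v set0 = 0.
Definition is_prob (rho : pdist) : Prop :=
  (forall g, 0 <= rho g <= 1) /\ \sum_g rho g = 1.

Definition component_additive (v : ngame) : Prop :=
  forall g, v g = \sum_(h | is_component g h) v h.

Definition extent (rho : pdist) : network := \bigcup_(g | 0 < rho g) g.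

Definition restrP (rho : pdist) (g : network) : pdist :=
  [ffun h : network => if h \subset g then \sum_(h' : network | h' \subset ~: g) rho (h :|: h')
             else 0].
Definition rho_minus (rho : pdist) (i : 'I_n) : pdist :=
  restrP rho (~: Lset i [set: link]).

Definition alloc := ngame -> pdist -> 'I_n -> R.

Definition is_alloc_rule (Psi : alloc) : Prop :=
  forall v rho, is_network_game v -> is_prob rho ->
    forall i, i \in N0 (extent rho) -> Psi v rho i = 0.

Definition component_balanced (Psi : alloc) (v : ngame) (rho : pdist) : Prop :=
  forall h, is_component (extent rho) h ->
    \sum_(i in Nset h) Psi v rho i = \sum_(g | 0 < rho g) rho g * v (g :&: h).

Definition balanced_contributions (Psi : alloc) (v : ngame) (rho : pdist) : Prop :=
  forall i j : 'I_n, i != j ->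
    Psi v rho i - Psi v (rho_minus rho j) i = Psi v rho j - Psi v (rho_minus rho i) j.

Definition myerson (v : ngame) (g : network) (i : 'I_n) : R :=
  \sum_(S : {set 'I_n} | i \notin S)
    ((#|S|`! * (n - #|S| - 1)`!)%:R / (n`!)%:R) *
    (v (restrN g (i |: S)) - v (restrN g S)).

Definition exp_myerson : alloc :=
  fun v rho i => \sum_(g : network) rho g * myerson v g i.

Definition inD (v : ngame) (rho : pdist) : Prop :=
  [/\ is_network_game v, is_prob rho & component_additive v].

End Networks.

(* For a fixed network g, the Myerson value is the Shapley value of the coalition
   game S |-> v(g|S).  Shapley values are efficient, vanish on null players and satisfy
   Myerson's balanced contributions identity; deleting the links of j from g amounts to
   deleting j from every coalition, and averaging over rho commutes with restricting rho
   to the networks avoiding the links of j.  For component additive v, the game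
   S |-> v(g|S) splits along any component h of the extent of rho, so the players of h
   share exactly v(g /\ h): this is component balance.
   Uniqueness is by induction on the size of the extent: deleting the links of a
   non-isolated player strictly shrinks it, so two rules satisfying the axioms agree on
   every rho^{-j}.  Balanced contributions then make their difference constant on each
   component, and component balance makes its sum over the component vanish. *)

Set Warnings "-notation-overridden,-ambiguous-paths".
From mathcomp Require Import all_boot all_order all_algebra.
From mathcomp Require Import reals ring zify lra.
Import Order.TTheory GRing.Theory Num.Theory.
Set Implicit Arguments. Unset Strict Implicit. Unset Printing Implicit Defensive.
Local Open Scope ring_scope.

Section SetSums.
Variables (T : finType) (V : nmodType).

Lemma setD1_notin (A : {set T}) x : x \notin A -> A :\ x = A.
Proof. by move=> xA; apply/setDidPl; rewrite disjoint_sym disjoints1. Qed.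

Lemma big_mem_setU1 (j : T) (P : pred {set T}) (F : {set T} -> V) :
  \sum_(S | P S && (j \in S)) F S = \sum_(S | P (j |: S) && (j \notin S)) F (j |: S).
Proof.
rewrite (reindex_onto (fun S => j |: S) (fun S => S :\ j)) /=; last first.
  by move=> S /andP[_ jS]; rewrite setD1K.
apply: eq_bigl => S; rewrite setU11 andbT.
have [jS | jNS] := boolP (j \in S); last by rewrite setU1K ?eqxx ?andbT.
by rewrite andbF; apply/andP => -[_ /eqP/setP/(_ j)]; rewrite setD11 jS.
Qed.

Lemma exchange_big_count (Q : T -> {set T} -> bool) (F : {set T} -> V) :
  \sum_i \sum_(S | Q i S) F S = \sum_S F S *+ #|[pred i | Q i S]|.
Proof.
under eq_bigr do rewrite big_mkcond.
rewrite exchange_big; apply: eq_bigr => S _.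
by rewrite -big_mkcond /= -sumr_const.
Qed.

End SetSums.

Section ShapleyValue.
Variables (n : nat) (R : numFieldType).
Implicit Types (u : {set 'I_n} -> R) (S T : {set 'I_n}).

Definition shapley_weight (k : nat) : R := (k`! * (n - k - 1)`!)%N%:R / n`!%:R.

Definition shapley u (i : 'I_n) : R :=
  \sum_(S : {set 'I_n} | i \notin S) shapley_weight #|S| * (u (i |: S) - u S).

Lemma shapley_weight_balance k : (k <= n)%N ->
  shapley_weight k.-1 *+ k - shapley_weight k *+ (n - k) = (k == n)%:R - (k == 0)%:R.
Proof.
move=> le_kn; have nf_neq0 : n`!%:R != 0 :> R by rewrite pnatr_eq0 -lt0n fact_gt0.
have factP m : (0 < m)%N -> (m.-1`! * m)%N = m`!.
  by case: m => // m _; rewrite factS mulnC.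
have down : (0 < k)%N -> shapley_weight k.-1 *+ k = (k`! * (n - k)`!)%N%:R / n`!%:R.
  move=> k_gt0; rewrite -[_ *+ _]mulr_natr mulrAC -natrM.
  have -> : (n - k.-1 - 1 = n - k)%N by lia.
  by rewrite mulnAC factP.
have up : (k < n)%N -> shapley_weight k *+ (n - k) = (k`! * (n - k)`!)%N%:R / n`!%:R.
  move=> lt_kn; rewrite -[_ *+ _]mulr_natr mulrAC -natrM -mulnA.
  by rewrite subn1 factP ?subn_gt0.
have ends_eq1 : (k == 0)%N || (k == n) -> (k`! * (n - k)`!)%N%:R / n`!%:R = 1 :> R.
  by case/orP => /eqP->; rewrite ?subnn ?subn0 fact0 ?mul1n ?muln1 mulfV.
have [k0 | k_gt0] := posnP k.
  subst k; rewrite subn0 in up ends_eq1; rewrite mulr0n sub0r subn0.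
  have [n0 | n_gt0] := posnP n; first by rewrite n0 mulr0n oppr0 subrr.
  by rewrite up // ends_eq1 // (ltn_eqF n_gt0) sub0r.
rewrite subr0 down //.
have [eq_kn | ne_kn] := eqVneq k n.
  by rewrite ends_eq1 ?eq_kn ?eqxx ?orbT // subnn mulr0n subr0.
by rewrite up ?ltn_neqAle ?ne_kn // subrr.
Qed.

Lemma shapley_null u i : (forall S, u (i |: S) = u S) -> shapley u i = 0.
Proof. by move=> null_i; apply: big1 => S _; rewrite null_i subrr mulr0. Qed.

Lemma shapleyD u1 u2 i : shapley (fun S => u1 S + u2 S) i = shapley u1 i + shapley u2 i.
Proof.
rewrite /shapley -big_split; apply: eq_bigr => S _ /=.
by rewrite -mulrDr opprD addrACA.
Qed.

Lemma shapley_efficient u : \sum_i shapley u i = u setT - u set0.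
Proof.
have shapleyE i :
    shapley u i = \sum_(T : {set 'I_n} | i \in T) shapley_weight #|T|.-1 * u T
                  - \sum_(S : {set 'I_n} | i \notin S) shapley_weight #|S| * u S.
  rewrite /shapley; under eq_bigr do rewrite mulrBr.
  rewrite sumrB [in RHS](eq_bigl (fun T => predT T && (i \in T))) // big_mem_setU1.
  by congr (_ - _); apply: eq_big => [// | S iS]; rewrite cardsU1 iS.
under eq_bigr do rewrite shapleyE.
rewrite sumrB !exchange_big_count -sumrB.
transitivity (\sum_(T : {set 'I_n}) (u T * (T == setT)%:R - u T * (T == set0)%:R)).
  apply: eq_bigr => T _.
  rewrite -mulrBr -!(mulrnAl (shapley_weight _)) -mulrBl mulrC; congr (_ * _).
  have le_Tn : (#|T| <= n)%N by have := max_card T; rewrite card_ord.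
  have -> : #|[pred i in T]| = #|T| by apply: eq_card.
  have -> : #|[pred i | i \notin T]| = (n - #|T|)%N.
    by apply/eqP; rewrite -(eqn_add2l #|T|) subnKC // cardC card_ord.
  rewrite shapley_weight_balance // -cards_eq0; congr (_%:R - _).
  by rewrite eqEcard subsetT cardsT card_ord /= eqn_leq le_Tn.
rewrite sumrB (bigD1 setT) // [in X in _ - X](bigD1 set0) //= !eqxx !mulr1.
by rewrite !big1 ?addr0 // => T /negbTE->; rewrite mulr0.
Qed.

Lemma shapley_removalE u i j : i != j ->
  shapley u i - shapley (fun S => u (S :\ j)) i =
  \sum_(S : {set 'I_n} | (i \notin S) && (j \notin S))
     shapley_weight #|S|.+1 * (u (i |: (j |: S)) - u (j |: S) - u (i |: S) + u S).
Proof.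
move=> neq_ij; have neq_ji : j != i by rewrite eq_sym.
have notin_jS S : (i \notin j |: S) = (i \notin S) by rewrite in_setU1 (negbTE neq_ij).
rewrite /shapley (bigID (fun S => j \in S)) [X in _ - X](bigID (fun S => j \in S)) /=.
rewrite !big_mem_setU1.
(* coalitions avoiding j do not notice its removal *)
have -> : \sum_(S : {set 'I_n} | (i \notin S) && (j \notin S))
      shapley_weight #|S| * (u ((i |: S) :\ j) - u (S :\ j)) =
    \sum_(S : {set 'I_n} | (i \notin S) && (j \notin S)) shapley_weight #|S| * (u (i |: S) - u S).
  by apply: eq_bigr => S /andP[_ jS]; rewrite !setD1_notin // in_setU1 negb_or neq_ji.
rewrite opprD addrACA subrr addr0 -sumrB.
apply: eq_big => [S | S /andP[_ jS]]; first by rewrite notin_jS.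
have -> : (i |: (j |: S)) :\ j = i |: S.
  by rewrite setUCA setU1K // in_setU1 negb_or neq_ji.
by rewrite setU1K // cardsU1 jS -mulrBr; congr (_ * _); ring.
Qed.

Lemma shapley_balanced_contributions u i j : i != j ->
  shapley u i - shapley (fun S => u (S :\ j)) i = shapley u j - shapley (fun S => u (S :\ i)) j.
Proof.
move=> neq_ij; have neq_ji : j != i by rewrite eq_sym.
rewrite !shapley_removalE //; apply: eq_big => [S | S _]; first by rewrite andbC.
by rewrite setUCA; congr (_ * _); ring.
Qed.

Lemma shapley_setI_null u T i : i \notin T -> shapley (fun S => u (S :&: T)) i = 0.
Proof.
move=> iNT; apply: shapley_null => S; congr u.
by apply/setP => x; rewrite !inE; case: eqVneq => // ->; rewrite (negbTE iNT) !andbF.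
Qed.

Lemma shapley_carrier_efficient u T :
  \sum_(i in T) shapley (fun S => u (S :&: T)) i = u T - u set0.
Proof.
have := shapley_efficient (fun S => u (S :&: T)); rewrite setTI set0I => <-.
rewrite [RHS](bigID (mem T)) /=.
by rewrite [X in _ = _ + X]big1 ?addr0 // => i; apply: shapley_setI_null.
Qed.

End ShapleyValue.

Section Components.
Variable n : nat.
Local Notation network := (network n).
Local Notation link := (link n).
Implicit Types (g h k E : network) (e : link) (T : {set 'I_n}).

Lemma link_pair e : exists x y, x != y /\ val e = [set x; y].
Proof. exact/cards2P/(valP e). Qed.

Lemma link_witness e : exists x, x \in val e.
Proof. by have [x [y [_ ->]]] := link_pair e; exists x; rewrite !inE eqxx. Qed.

Lemma NsetP g x : reflect (exists2 e, e \in g & x \in val e) (x \in Nset g).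
Proof.
apply: (iffP bigcupP) => [[i _] | [e eg xe]].
  rewrite inE => /andP[_ /existsP[e /andP[eg /eqP ev]]].
  by exists e => //; rewrite ev !inE eqxx orbT.
have [a [b [neq_ab ev]]] := link_pair e.
move: xe; rewrite ev !inE => /orP[] /eqP->.
  by exists b => //; rewrite inE neq_ab; apply/existsP; exists e; rewrite eg ev setUC eqxx.
by exists a => //; rewrite inE eq_sym neq_ab; apply/existsP; exists e; rewrite eg ev eqxx.
Qed.

Lemma Nset_sub h g : h \subset g -> Nset h \subset Nset g.
Proof.
move=> /subsetP hg; apply/subsetP => x /NsetP[e eh xe].
by apply/NsetP; exists e; first exact: hg.
Qed.

Lemma adjP g x y :
  reflect (x != y /\ exists2 e, e \in g & val e = [set x; y]) (adj g x y).
Proof.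
apply: (iffP andP) => [[/existsP[e /andP[eg /eqP ev]] neq_xy] | [neq_xy [e eg ev]]].
  by split=> //; exists e.
by split=> //; apply/existsP; exists e; rewrite eg ev eqxx.
Qed.

Lemma adj_sym g : symmetric (adj g).
Proof. by move=> x y; rewrite /adj setUC eq_sym. Qed.

Lemma adj_sub h g : h \subset g -> subrel (adj h) (adj g).
Proof. by move=> /subsetP hg x y /adjP[neq_xy [e /hg eg ev]]; apply/adjP; split=> //; exists e. Qed.

Lemma adj_link g e x y :
  e \in g -> x \in val e -> y \in val e -> x != y -> adj g x y.
Proof.
move=> eg xe ye neq_xy; apply/adjP; split=> //; exists e => //.
have [a [b [_ ev]]] := link_pair e; move: xe ye neq_xy; rewrite ev !inE.
by do 2![case/orP=> /eqP->]; rewrite ?eqxx // setUC.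
Qed.

Lemma connectedP h :
  reflect (forall i j, i \in Nset h -> j \in Nset h -> connect (adj h) i j) (connectedN h).
Proof.
apply: (iffP forallP) => [conn i j ih jh | conn i].
  by move/implyP/(_ ih)/forallP/(_ j)/implyP: (conn i); apply.
by apply/implyP => ih; apply/forallP => j; apply/implyP; apply: conn.
Qed.

Lemma maximalP g h :
  reflect (forall i e, i \in Nset h -> e \in g -> i \in val e -> e \in h) (maximalIn g h).
Proof.
apply: (iffP forallP) => [max i e ih eg ie | max i].
  by move/implyP/(_ ih)/forallP/(_ e)/implyP/(_ eg)/implyP: (max i); apply.
apply/implyP => ih; apply/forallP => e; apply/implyP => eg; apply/implyP; exact: max.
Qed.

Lemma restrN_sub g T : restrN g T \subset g.
Proof. by apply/subsetP => e; rewrite inE => /andP[]. Qed.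

Lemma restrN_restrN g T1 T2 : restrN (restrN g T1) T2 = restrN g (T1 :&: T2).
Proof. by apply/setP => e; rewrite !inE subsetI andbA. Qed.

Lemma restrN0 g : restrN g set0 = set0.
Proof.
apply/setP => e; rewrite !inE; apply/negP => /andP[_ /subsetP sub0].
by have [x xe] := link_witness e; move: (sub0 x xe); rewrite inE.
Qed.

Lemma restrN_notin_setC g T e : e \in restrN g T -> e \notin restrN g (~: T).
Proof.
rewrite !inE => /andP[_ /subsetP eT]; apply/negP => /andP[_ /subsetP eNT].
by have [x xe] := link_witness e; move: (eNT x xe); rewrite inE eT.
Qed.

Definition no_crossing k T := forall e, e \in k -> (val e \subset T) || (val e \subset ~: T).

Lemma no_crossingC k T : no_crossing k T -> no_crossing k (~: T).
Proof. by move=> nc e /nc; rewrite setCK orbC. Qed.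

Lemma no_crossing_sub k k' T : k' \subset k -> no_crossing k T -> no_crossing k' T.
Proof. by move=> /subsetP sub nc e /sub /nc. Qed.

Lemma component_one_side k c T : is_component k c -> no_crossing k T ->
  (c \subset restrN k T) || (c \subset restrN k (~: T)).
Proof.
case/and4P=> /subsetP ck /set0Pn[e0 e0c] /connectedP conn_c _ nc.
have [x xe0] := link_witness e0.
have xc : x \in Nset c by apply/NsetP; exists e0.
have closedT : closed (adj c) T.
  move=> y z /adjP[_ [e ec ev]].
  have [ye ze] : y \in val e /\ z \in val e by rewrite ev !inE !eqxx orbT.
  case/orP: (nc e (ck e ec)) => /subsetP sub; first by rewrite !sub.
  by move: (sub y ye) (sub z ze); rewrite !inE => /negbTE-> /negbTE->.
have same_side e y : e \in c -> y \in val e -> (y \in T) = (x \in T).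
  move=> ec ye; have yc : y \in Nset c by apply/NsetP; exists e.
  exact (closed_connect closedT (conn_c y x yc xc)).
apply/orP; case xT: (x \in T); [left | right]; apply/subsetP => e ec;
  by rewrite inE ck //=; apply/subsetP => y ye; rewrite ?inE (same_side e y) ?xT.
Qed.

Lemma component_restrN k c T : is_component k c -> c \subset restrN k T ->
  is_component (restrN k T) c.
Proof.
case/and4P=> _ c0 conn_c /maximalP max_c cT; apply/and4P; split=> //.
by apply/maximalP => i e ic; rewrite inE => /andP[ek _]; apply: max_c.
Qed.

Lemma component_of_restrN k c T : is_component (restrN k T) c -> no_crossing k T ->
  is_component k c /\ c \subset restrN k T.
Proof.
case/and4P=> cT c0 conn_c /maximalP max_c nc; split=> //; apply/and4P; split=> //.
  exact: subset_trans cT (restrN_sub _ _).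
apply/maximalP => i e ic ek ie; apply: (max_c i) => //; rewrite inE ek /=.
have [e' e'c ie'] := NsetP _ _ ic.
have iT : i \in T by move: (subsetP cT e' e'c); rewrite inE => /andP[_ /subsetP]; apply.
by case/orP: (nc e ek) => // /subsetP/(_ i ie); rewrite inE iT.
Qed.

Definition component_of E i : network :=
  [set e in E | [exists x in val e, connect (adj E) i x]].

Lemma component_ofP E i : i \in Nset E ->
  is_component E (component_of E i) /\ i \in Nset (component_of E i).
Proof.
move=> iE; set h := component_of E i.
have hE : h \subset E by apply/subsetP => e; rewrite inE => /andP[].
have conn_hE x : connect (adj h) i x -> connect (adj E) i x.
  by apply: connect_sub => y z /(adj_sub hE)/connect1.
have closed_h : closed (adj E) (connect (adj h) i).
  apply: (intro_closed (sym_connect_sym (adj_sym E))) => y z /adjP[neq_yz [e eE ev]].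
  rewrite !inE => iy; apply: (connect_trans iy (connect1 _)); apply/adjP; split=> //.
  exists e => //; rewrite inE eE; apply/existsP; exists y.
  by rewrite ev !inE eqxx (conn_hE _ iy).
have conn_Eh x : connect (adj E) i x -> connect (adj h) i x.
  by move=> iEx; have := closed_connect closed_h iEx; rewrite !inE connect0.
have conn_Nset x : x \in Nset h -> connect (adj E) i x.
  move=> /NsetP[e]; rewrite inE => /andP[eE /existsP[y /andP[ye iy]]] xe.
  have [<- // | neq_yx] := eqVneq y x.
  exact: connect_trans iy (connect1 (adj_link eE ye xe neq_yx)).
have [e0 e0E ie0] := NsetP _ _ iE.
have e0h : e0 \in h by rewrite inE e0E; apply/existsP; exists i; rewrite ie0 connect0.
split; last by apply/NsetP; exists e0.
apply/and4P; split=> //; first by apply/set0Pn; exists e0.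
  apply/connectedP => x y xh yh.
  apply: (connect_trans (y := i)); last exact/conn_Eh/conn_Nset.
  by rewrite (sym_connect_sym (adj_sym h)); apply/conn_Eh/conn_Nset.
apply/maximalP => x e xh eE xe; rewrite inE eE; apply/existsP; exists x.
by rewrite xe conn_Nset.
Qed.

End Components.

Section MyersonComponents.
Variables (n : nat) (R : realType).
Local Notation network := (network n).
Implicit Types (v : ngame n R) (g h k E : network) (T : {set 'I_n}).

Lemma component_additive_split v k T : component_additive v -> no_crossing k T ->
  v k = v (restrN k T) + v (restrN k (~: T)).
Proof.
move=> cadd_v nc; rewrite cadd_v (cadd_v (restrN k T)) (cadd_v (restrN k (~: T))).
rewrite (bigID (fun c : network => c \subset restrN k T)) /=; congr (_ + _); apply: eq_bigl => c.
  apply/andP/idP => [[kc cT] | Tc]; first exact: component_restrN.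
  by have [] := component_of_restrN Tc nc.
apply/andP/idP => [[kc NcT] | NTc].
  by apply: component_restrN => //; move: (component_one_side kc nc); rewrite (negbTE NcT).
have [kc cNT] := component_of_restrN NTc (no_crossingC nc); split=> //.
case/and4P: kc => _ /set0Pn[e ec] _ _; apply/negP => /subsetP/(_ e ec).
by move/restrN_notin_setC; rewrite (subsetP cNT e ec).
Qed.

Lemma no_crossing_component E h : is_component E h -> no_crossing E (Nset h).
Proof.
case/and4P=> _ _ _ /maximalP max_h e eE.
have [NTe | /subsetPn[x xe]] := boolP (val e \subset ~: Nset h); first by apply/orP; right.
rewrite inE negbK => xh; apply/orP; left.
by apply/subsetP => y ye; apply/NsetP; exists e => //; apply: (max_h x).
Qed.

Lemma restrN_component g E h : g \subset E -> is_component E h -> restrN g (Nset h) = g :&: h.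
Proof.
move=> /subsetP gE /and4P[_ _ _ /maximalP max_h]; apply/setP => e; rewrite !inE.
have [eg | //] := boolP (e \in g); apply/idP/idP => [/subsetP eh | eh].
  by have [x xe] := link_witness e; apply: (max_h x) => //; [apply: eh | apply: gE].
by apply/subsetP => y ye; apply/NsetP; exists e.
Qed.

Lemma myerson_shapley v g i : myerson v g i = shapley (fun S => v (restrN g S)) i.
Proof. by []. Qed.

Lemma myerson_component_sum v g E h : is_network_game v -> component_additive v ->
  g \subset E -> is_component E h -> \sum_(i in Nset h) myerson v g i = v (g :&: h).
Proof.
move=> v0 cadd_v gE hE; set T := Nset h; pose u S := v (restrN g S).
have u_split S : u S = u (S :&: T) + u (S :&: ~: T).
  rewrite /u -!restrN_restrN; apply: component_additive_split => //.
  exact: no_crossing_sub (subset_trans (restrN_sub g S) gE) (no_crossing_component hE).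
have myersonE i : i \in T -> myerson v g i = shapley (fun S => u (S :&: T)) i.
  move=> iT; transitivity (shapley (fun S => u (S :&: T) + u (S :&: ~: T)) i).
    by apply: eq_bigr => S _; rewrite -!u_split.
  by rewrite shapleyD (@shapley_setI_null _ _ _ (~: T)) ?addr0 // inE negbK.
rewrite (eq_bigr _ myersonE) shapley_carrier_efficient /u restrN0 v0 subr0.
by rewrite /T (restrN_component gE hE).
Qed.

End MyersonComponents.

Section RestrictedDistributions.
Variables (n : nat) (R : realType).
Local Notation network := (network n).
Implicit Types (rho : pdist n R) (g h G : network).

Lemma sum_restrP rho G (F : network -> R) :
  \sum_h restrP rho G h * F h = \sum_g rho g * F (g :&: G).
Proof.
rewrite (bigID (fun h => h \subset G)) /= [X in _ + X]big1 ?addr0; last first.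
  by move=> h /negbTE hG; rewrite ffunE hG mul0r.
rewrite [RHS](partition_big (fun g => g :&: G) (fun h => h \subset G)) //=; last first.
  by move=> g _; apply: subsetIr.
apply: eq_bigr => h hG; rewrite ffunE hG big_distrl /=.
rewrite [RHS](eq_bigr (fun g => rho g * F h)); last by move=> g /eqP->.
rewrite [RHS](reindex_onto (fun h' => h :|: h') (fun g => g :&: ~: G)) /=; last first.
  by move=> g /eqP <-; rewrite -setIUr setUCr setIT.
apply: eq_bigl => h'; apply/idP/andP => [h'NG | [_ /eqP <-]]; last exact: subsetIr.
have /eqP h'G0 : h' :&: G == set0 by rewrite setI_eq0 disjoints_subset.
have /eqP hNG0 : h :&: ~: G == set0 by rewrite setI_eq0 disjoints_subset setCK.
by rewrite !setIUl (setIidPl hG) (setIidPl h'NG) h'G0 hNG0 setU0 set0U !eqxx.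
Qed.

Lemma restrP_prob rho G : is_prob rho -> is_prob (restrP rho G).
Proof.
move=> [rho01 rho_sum1].
have ge0 h : 0 <= restrP rho G h.
  rewrite ffunE; case: ifP => // _.
  by apply: sumr_ge0 => g _; case/andP: (rho01 (h :|: g)).
have sum1 : \sum_h restrP rho G h = 1.
  under eq_bigr do rewrite -[restrP _ _ _]mulr1.
  by rewrite (sum_restrP _ _ (fun=> 1)); under eq_bigr do rewrite mulr1.
split=> // h; rewrite ge0 -sum1 (bigD1 h) //= lerDl.
exact: sumr_ge0.
Qed.

Lemma sum_prob_support rho (F : network -> R) : is_prob rho ->
  \sum_g rho g * F g = \sum_(g | 0 < rho g) rho g * F g.
Proof.
case=> rho01 _; rewrite [LHS](bigID (fun g => 0 < rho g)) /= [X in _ + X]big1 ?addr0 //.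
move=> g; rewrite -leNgt => rho_le0; case/andP: (rho01 g) => rho_ge0 _.
have -> : rho g = 0 by apply: le_anti; rewrite rho_le0 rho_ge0.
by rewrite mul0r.
Qed.

Lemma sub_extent rho g : 0 < rho g -> g \subset extent rho.
Proof. by move=> rho_gt0; rewrite (bigcup_sup g). Qed.

Lemma extent_restrP rho G : is_prob rho -> extent (restrP rho G) \subset extent rho :&: G.
Proof.
move=> [rho01 _]; apply/subsetP => e /bigcupP[h]; rewrite ffunE.
case: ifP => [hG pos eh | _]; last by rewrite ltxx.
rewrite inE (subsetP hG e eh) andbT.
have [h' /andP[_ pos'] | none] := pickP (fun h' => (h' \subset ~: G) && (0 < rho (h :|: h'))).
  by apply/bigcupP; exists (h :|: h'); rewrite // inE eh.
move: pos; rewrite big1 ?ltxx // => h' h'NG; apply: le_anti.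
move: (none h') => /= /negbT; rewrite h'NG -leNgt => ->.
by case/andP: (rho01 (h :|: h')).
Qed.

Lemma extent_rho_minus_lt rho j : is_prob rho -> j \in Nset (extent rho) ->
  (#|extent (rho_minus rho j)| < #|extent rho|)%N.
Proof.
move=> rho_prob jE; apply: leq_ltn_trans (subset_leq_card (extent_restrP _ rho_prob)) _.
apply/proper_card/properP; split; first exact: subsetIl.
by have [e eE je] := NsetP _ _ jE; exists e; rewrite // !inE negb_and negbK je orbT.
Qed.

Lemma inD_rho_minus (v : ngame n R) rho j : inD v rho -> inD v (rho_minus rho j).
Proof. by case=> v0 rho_prob cadd_v; split=> //; apply: restrP_prob. Qed.

End RestrictedDistributions.

Section ExpectedMyerson.
Variables (n : nat) (R : realType).
Local Notation network := (network n).
Implicit Types (v : ngame n R) (rho : pdist n R) (g : network).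

Lemma restrN_setU1_notin g i S : i \notin Nset g -> restrN g (i |: S) = restrN g S.
Proof.
move=> iNg; apply/setP => e; rewrite !inE; have [eg | //] /= := boolP (e \in g).
apply/idP/idP => [/subsetP eiS | /subsetP eS]; apply/subsetP => x xe; last by rewrite !inE eS ?orbT.
have := eiS x xe; rewrite !inE => /orP[/eqP xi | //].
by case/negP: iNg; apply/NsetP; exists e; rewrite // -xi.
Qed.

Lemma restrN_remove_links g j S : restrN (g :&: ~: Lset j setT) S = restrN g (S :\ j).
Proof. by apply/setP => e; rewrite !inE subsetD1; case: (e \in g); rewrite //= andbC. Qed.

Lemma exp_myerson_rho_minus v rho i j : exp_myerson v (rho_minus rho j) i =
  \sum_g rho g * shapley (fun S => v (restrN g (S :\ j))) i.
Proof.
rewrite /exp_myerson sum_restrP; apply: eq_bigr => g _; congr (_ * _).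
by apply: eq_bigr => S _; rewrite !restrN_remove_links.
Qed.

Lemma exp_myerson_alloc_rule : is_alloc_rule (@exp_myerson n R).
Proof.
move=> v rho _ rho_prob i; rewrite inE => iNE.
rewrite /exp_myerson sum_prob_support // big1 // => g rho_gt0.
rewrite myerson_shapley shapley_null ?mulr0 // => S.
rewrite restrN_setU1_notin //; apply: contra iNE; apply/subsetP.
exact/Nset_sub/sub_extent.
Qed.

Lemma exp_myerson_component_balanced v rho :
  inD v rho -> component_balanced (@exp_myerson n R) v rho.
Proof.
case=> v0 rho_prob cadd_v h hE; rewrite /exp_myerson exchange_big /=.
under eq_bigr do rewrite -mulr_sumr.
rewrite sum_prob_support //; apply: eq_bigr => g rho_gt0.
by rewrite (myerson_component_sum v0 cadd_v (sub_extent rho_gt0) hE).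
Qed.

Lemma exp_myerson_balanced_contributions v rho :
  balanced_contributions (@exp_myerson n R) v rho.
Proof.
move=> i j neq_ij; rewrite !exp_myerson_rho_minus /exp_myerson -!sumrB.
apply: eq_bigr => g _; rewrite -!mulrBr; congr (_ * _).
exact: shapley_balanced_contributions.
Qed.

End ExpectedMyerson.

Section Uniqueness.
Variables (n : nat) (R : realType) (Psi Phi : alloc n R) (v : ngame n R).
Hypotheses (Psi_alloc : is_alloc_rule Psi) (Phi_alloc : is_alloc_rule Phi).
Hypothesis Psi_axioms : forall rho, inD v rho ->
  component_balanced Psi v rho /\ balanced_contributions Psi v rho.
Hypothesis Phi_axioms : forall rho, inD v rho ->
  component_balanced Phi v rho /\ balanced_contributions Phi v rho.

Lemma alloc_rule_unique rho : inD v rho -> forall i, Psi v rho i = Phi v rho i.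
Proof.
have [m] := ubnP #|extent rho|; elim: m rho => // m IH rho lt_m Drho i.
have [v0 rho_prob _] := Drho.
have [iE | iNE] := boolP (i \in Nset (extent rho)); last first.
  have iN0 : i \in N0 (extent rho) by rewrite inE.
  by rewrite (Psi_alloc v0 rho_prob iN0) (Phi_alloc v0 rho_prob iN0).
have agree_minus k j : k \in Nset (extent rho) ->
    Psi v (rho_minus rho k) j = Phi v (rho_minus rho k) j.
  move=> kE; apply: IH; last exact: inD_rho_minus.
  exact: leq_trans (extent_rho_minus_lt rho_prob kE) _.
have [hE ih] := component_ofP iE; set h := component_of _ i in hE ih.
pose d j := Psi v rho j - Phi v rho j.
have d_const j : j \in Nset h -> d j = d i.
  move=> jh; have [-> // | neq_ji] := eqVneq j i.
  have jE : j \in Nset (extent rho).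
    by case/and4P: hE => hsub _ _ _; apply: (subsetP (Nset_sub hsub)).
  have := (Psi_axioms Drho).2 j i neq_ji; have := (Phi_axioms Drho).2 j i neq_ji.
  by rewrite /d !agree_minus //; lra.
have : \sum_(j in Nset h) d j = 0.
  by rewrite sumrB (Psi_axioms Drho).1 // (Phi_axioms Drho).1 // subrr.
rewrite (eq_bigr _ d_const) sumr_const => /eqP; rewrite mulrn_eq0 cards_eq0.
case/orP=> [/eqP h0 | ]; first by rewrite h0 inE in ih.
by rewrite subr_eq0 => /eqP.
Qed.

End Uniqueness.

Theorem mainTheorem2 (n : nat) (R : realType) :
  (is_alloc_rule (@exp_myerson n R) /\
   (forall v rho, inD v rho ->
      component_balanced (@exp_myerson n R) v rho /\
      balanced_contributions (@exp_myerson n R) v rho)) /\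
  (forall Psi : alloc n R,
     is_alloc_rule Psi ->
     (forall v rho, inD v rho ->
        component_balanced Psi v rho /\ balanced_contributions Psi v rho) ->
     forall v rho, inD v rho -> forall i, Psi v rho i = exp_myerson v rho i).
Proof.
pose Psi_m := @exp_myerson n R.
have Psi_m_axioms v rho : inD v rho ->
    component_balanced Psi_m v rho /\ balanced_contributions Psi_m v rho.
  move=> Drho; split; first exact: exp_myerson_component_balanced.
  exact: exp_myerson_balanced_contributions.
split; first by split; [apply: exp_myerson_alloc_rule | apply: Psi_m_axioms].
move=> Psi Psi_alloc Psi_axioms v.
exact: alloc_rule_unique Psi_alloc (@exp_myerson_alloc_rule n R) (Psi_axioms v) (Psi_m_axioms v).
Qed.
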